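(* Let $m\ge 2$, $k\ge 1$, $N=m^k$, and let $\mathbb{F}_q$ be a finite field with $m\mid q-1$ and $\rho\in\mathbb{F}_q$ a primitive $m$-th root of unity. For $i\in\{1,\ldots,k\}$ let $\mathbf{V}_i$ be the $N\times m^{k-1}$ matrix whose columns are the elements of $\mathcal{V}_i=\left\{\prod_{s=1,s\ne i}^{k}\mathbf{X}_s^{x_s}\mathbf{w} : x_s\in\{0,1,\ldots,m-1\}\right\}$. Then for any $i,j\in\{1,\ldots,k\}$, $$\mathrm{rank}\big([\mathbf{V}_i\ \ \mathbf{X}_j\mathbf{V}_i\ \ \mathbf{X}_j^2\mathbf{V}_i\ \cdots\ \mathbf{X}_j^{m-1}\mathbf{V}_i]\big)=\Big|\bigcup_{l=0}^{m-1}\mathcal{L}(\mathbf{X}_j^l\mathbf{V}_i)\Big|=\begin{cases}m^k,& i=j,\\ m^{k-1},& i\ne j.\end{cases}$$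
   Context: For $s\in\{1,\ldots,k\}$, $\mathbf{X}_s=\mathbf{I}_{m^{s-1}}\otimes\mathrm{blkdiag}\big(\mathbf{I}_{N/m^s},\rho\mathbf{I}_{N/m^s},\ldots,\rho^{m-1}\mathbf{I}_{N/m^s}\big)$, an $N\times N$ diagonal matrix with $\mathbf{X}_s^m=\mathbf{I}_N$; $\otimes$ is the Kronecker product; $\mathbf{w}$ is the all-ones vector of length $N$. Lattice representation: every matrix whose columns are vectors $\prod_{s=1}^k\mathbf{X}_s^{x_s}\mathbf{w}$ with $(x_1,\ldots,x_k)\in\{0,\ldots,m-1\}^k$ is mapped by $\mathcal{L}$ to the set of exponent vectors of its columns (exponents mod $m$); so $\mathcal{L}(\mathbf{X}_j^l\mathbf{V}_i)=\{x+l e_j \bmod m : x\in\mathcal{L}(\mathbf{V}_i)\}$. *)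

From HB Require Import structures.
From mathcomp Require Import all_boot all_order all_algebra.
Set Implicit Arguments. Unset Strict Implicit. Unset Printing Implicit Defensive.
Import GRing.Theory.
Local Open Scope ring_scope.

Section Defs.
Variables (F : finFieldType) (m k : nat) (rho : F).

(* N = m^k.  Rows are indexed by 'I_(m^k), 0-based.  The paper's index
   s \in {1..k} is represented by s : 'I_k with paper s = s+1. *)

Fixpoint mxpow (n : nat) (A : 'M[F]_n) (e : nat) : 'M[F]_n :=
  if e is e'.+1 then A *m mxpow A e' else 1%:M.

(* X_s = I_{m^{s-1}} (x) blkdiag(I_{N/m^s}, rho I, ..., rho^{m-1} I):
   the diagonal entry at row r is rho^b where b is the index of the block of
   size N/m^s = m^(k-s) containing (r mod N/m^{s-1}) = r mod m^(k-s+1). *)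
Definition Xmat (s : 'I_k) : 'M[F]_(m ^ k) :=
  diag_mx (\row_(r < m ^ k)
     rho ^+ ((r %% m ^ (k - s)) %/ m ^ (k - s.+1))).

Definition wvec : 'cV[F]_(m ^ k) := const_mx 1.

Definition expvec := {ffun 'I_k -> 'I_m}.

Definition latvec (x : expvec) : 'cV[F]_(m ^ k) :=
  (\big[mulmx/1%:M]_(s < k) mxpow (Xmat s) (x s)) *m wvec.

Definition Vset (i : 'I_k) : {set 'cV[F]_(m ^ k)} :=
  [set (\big[mulmx/1%:M]_(s < k | s != i) mxpow (Xmat s) (x s)) *m wvec
   | x : expvec].

Definition Lat n (M : 'M[F]_(m ^ k, n)) : {set expvec} :=
  [set x : expvec | [exists c : 'I_n, col c M == latvec x]].

End Defs.

Arguments Xmat {F} m k rho s.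
Arguments wvec {F} m k.
Arguments latvec {F} m k rho x.
Arguments Vset {F} m k rho i.
Arguments Lat {F} m k rho {n} M.

From HB Require Import structures.
From mathcomp Require Import all_boot all_order all_algebra.
From mathcomp Require Import zify.
Set Implicit Arguments. Unset Strict Implicit. Unset Printing Implicit Defensive.
Import GRing.Theory.
Local Open Scope ring_scope.

(* Row [r] of [X_s] carries [rho ^+ d_s(r)], where [d_s(r)] is the [s]-th
   base-[m] digit of [r]; hence the lattice vector with exponent [x] is the
   character [r |-> rho ^+ (sum_s d_s(r) x_s)] of [(Z/m)^k], read through the
   digit bijection [r <-> (d_s(r))_s].  Since [m] divides [q - 1], [m] is
   invertible in [F] and these characters are orthogonal, so distinct lattice
   vectors are linearly independent: the rank of a matrix of lattice vectors
   is the number of its distinct columns, i.e. the size of its lattice set.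
   Multiplication by [X_j^l] adds [l] to the [j]-th exponent, and [V_i] is the
   set of exponents vanishing at [i]; shifting in direction [j] fills the whole
   lattice when [i = j] and preserves this hyperplane otherwise. *)

Lemma big_mulmx_diag (R : pzRingType) n (I : Type) (r : seq I) (P : pred I)
    (f : I -> 'rV[R]_n) :
  \big[mulmx/1%:M]_(s <- r | P s) diag_mx (f s)
  = diag_mx (\row_j \prod_(s <- r | P s) f s 0 j).
Proof.
elim: r => [|a r IH].
  by rewrite big_nil -diag_const_mx; congr diag_mx; apply/rowP => j;
    rewrite !mxE big_nil.
rewrite big_cons; case Pa: (P a); rewrite IH; last first.
  by congr diag_mx; apply/rowP => j; rewrite !mxE big_cons Pa.
rewrite mul_diag_mx; apply/matrixP => p q; rewrite !mxE big_cons Pa.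
by case: eqP => [->|_]; rewrite ?mulr1n ?mulr0n ?mulr0.
Qed.

Lemma mul_diag_mx_const1 (R : pzRingType) n (v : 'rV[R]_n) :
  diag_mx v *m const_mx 1 = v^T.
Proof.
by rewrite mul_diag_mx; apply/matrixP => p q; rewrite !mxE mulr1 [q]ord1.
Qed.

Lemma mxpow_diag (F : finFieldType) n (v : 'rV[F]_n) e :
  mxpow (diag_mx v) e = diag_mx (\row_j v 0 j ^+ e).
Proof.
elim: e => [|e IH] /=.
  by rewrite -diag_const_mx; congr diag_mx; apply/rowP => j; rewrite !mxE.
rewrite IH mul_diag_mx; apply/matrixP => p q; rewrite !mxE.
by case: eqP => [->|_]; rewrite ?mulr1n ?mulr0n ?mulr0 // exprS.
Qed.

Lemma natr_card_finField (F : finFieldType) : #|F|%:R = 0 :> F.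
Proof.
have : \sum_(x : F) x = \sum_(x : F) (x + 1) := reindex_inj (addIr 1).
rewrite big_split /= sumr_const => /eqP.
by rewrite -subr_eq0 opprD addrA subrr add0r oppr_eq0 => /eqP.
Qed.

Lemma natr_neq0_dvdn_card_pred (F : finFieldType) m :
  (m %| #|F|.-1)%N -> m%:R != 0 :> F.
Proof.
have F_gt0 : (0 < #|F|)%N by apply/card_gt0P; exists 0.
case/dvdnP => t ht; apply/eqP => m0; have := natr_card_finField F.
rewrite -(prednK F_gt0) ht -addn1 natrD natrM m0 mulr0 add0r => /eqP.
by rewrite oner_eq0.
Qed.

Lemma eq_base_digits m n r r' : (0 < m)%N -> (r < m ^ n)%N -> (r' < m ^ n)%N ->
  (forall t, t < n -> r %/ m ^ t %% m = r' %/ m ^ t %% m)%N -> r = r'.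
Proof.
move=> m_gt0; elim: n r r' => [|n IH] r r' hr hr' H.
  by move: hr hr'; rewrite expn0 !ltnS !leqn0 => /eqP-> /eqP->.
have /= := H 0%N isT; rewrite expn0 !divn1 => E0.
rewrite (divn_eq r m) (divn_eq r' m) E0; congr (_ * _ + _)%N.
apply: IH; rewrite ?ltn_divLR -?expnSr // => t ht.
by rewrite -!divnMA -expnS; apply: H.
Qed.

Lemma dvdn_add_opp m u v : (u < m)%N -> (v < m)%N ->
  (m %| u + (m - v) %% m)%N = (u == v).
Proof.
move=> hu hv; case: (posnP v) => [->|v0].
  by rewrite subn0 modnn addn0 /dvdn modn_small.
rewrite (modn_small (_ : m - v < m)%N); last by lia.
case: (leqP v u) => hvu.
  have -> : (u + (m - v) = m + (u - v))%N by lia.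
  rewrite dvdn_addr // /dvdn modn_small; last by lia.
  by rewrite subn_eq0 eqn_leq hvu andbT.
rewrite /dvdn modn_small; last by lia.
by rewrite (ltn_eqF hvu); apply/negbTE/eqP; lia.
Qed.

Section LatticeVectors.
Variables (F : finFieldType) (m k : nat) (rho : F).
Hypothesis m_gt0 : (0 < m)%N.

Local Notation X := (Xmat m k rho).
Local Notation latvec := (latvec m k rho).
Local Notation Lat := (Lat m k rho).
Local Notation N := (m ^ k)%N.

Definition digit (s : 'I_k) (r : 'I_N) : nat := (r %/ m ^ (k - s.+1)) %% m.

Lemma digit_lt s r : (digit s r < m)%N.
Proof. exact: ltn_pmod. Qed.

Definition digits (r : 'I_N) : expvec m k := [ffun s => Ordinal (digit_lt s r)].

Lemma digits_bij : bijective digits.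
Proof.
apply: inj_card_bij; last by rewrite card_ffun !card_ord.
move=> r r' /ffunP E; apply/val_inj/(@eq_base_digits m k); rewrite ?ltn_ord //.
move=> t ht; have hs : (k - t.+1 < k)%N by lia.
have := congr1 val (E (Ordinal hs)); rewrite !ffunE /= /digit.
by have -> : (k - (k - t.+1).+1 = t)%N by lia.
Qed.

Lemma XmatE s : X s = diag_mx (\row_r rho ^+ digit s r).
Proof.
congr diag_mx; apply/rowP => r; rewrite !mxE /digit divn_modl; last first.
  by apply: dvdn_exp2l; rewrite leq_sub2l.
have -> : (k - s = (k - s.+1).+1)%N by rewrite subnSK.
by rewrite expnS mulnK // expn_gt0 m_gt0.
Qed.

Lemma mxpow_XmatE s e : mxpow (X s) e = diag_mx (\row_r rho ^+ (digit s r * e)).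
Proof.
by rewrite XmatE mxpow_diag; congr diag_mx; apply/rowP => r; rewrite !mxE exprM.
Qed.

Lemma prod_Xmat_wvec (P : pred 'I_k) (x : expvec m k) :
  (\big[mulmx/1%:M]_(s < k | P s) mxpow (X s) (x s)) *m wvec m k
  = \col_r \prod_(s < k | P s) rho ^+ (digit s r * x s).
Proof.
under eq_bigr => s _ do rewrite mxpow_XmatE.
rewrite big_mulmx_diag mul_diag_mx_const1; apply/matrixP => r c; rewrite !mxE.
by apply: eq_bigr => s _; rewrite mxE.
Qed.

Lemma latvecE x : latvec x = \col_r \prod_(s < k) rho ^+ (digit s r * x s).
Proof. exact: prod_Xmat_wvec. Qed.

Definition zero_coord (i : 'I_k) (x : expvec m k) : expvec m k :=
  [ffun s => if s == i then Ordinal m_gt0 else x s].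

Definition zero_coord_set (i : 'I_k) : {set expvec m k} :=
  [set x : expvec m k | val (x i) == 0%N].

Lemma Vset_latvec i : Vset m k rho i = latvec @: zero_coord_set i.
Proof.
have VsetE (x : expvec m k) :
    (\big[mulmx/1%:M]_(s < k | s != i) mxpow (X s) (x s)) *m wvec m k
    = latvec (zero_coord i x).
  rewrite prod_Xmat_wvec latvecE; apply/matrixP => r c; rewrite !mxE.
  rewrite [in RHS](bigD1 i) //= ffunE eqxx muln0 expr0 mul1r.
  by apply: eq_bigr => s /negPf si; rewrite ffunE si.
apply/setP => v; apply/imsetP/imsetP => [[x _ ->]|[y]].
  by exists (zero_coord i x); rewrite ?inE ?ffunE ?eqxx // VsetE.
rewrite inE => /eqP y0 ->; exists y => //; rewrite VsetE; congr latvec.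
by apply/ffunP => s; rewrite ffunE; case: eqP => // ->; apply: val_inj.
Qed.

Definition shift_coord (j : 'I_k) (l : nat) (x : expvec m k) : expvec m k :=
  [ffun s => if s == j then Ordinal (ltn_pmod (x s + l) m_gt0) else x s].

Lemma bigcup_shift_zero_coord (i j : 'I_k) :
  \bigcup_(l < m) shift_coord j l @: zero_coord_set i
  = if i == j then setT else zero_coord_set i.
Proof.
apply/setP => x; case: eqP => [<-|/eqP ij]; rewrite !inE.
  apply/bigcupP; exists (x i) => //; apply/imsetP; exists (zero_coord i x).
    by rewrite inE ffunE eqxx.
  apply/ffunP => s; rewrite !ffunE; case: eqP => [->|] //.
  by apply: val_inj; rewrite /= add0n modn_small.
apply/bigcupP/idP => [[l _ /imsetP [y]]|x0].
  by rewrite inE => y0 ->; rewrite ffunE (negPf ij).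
exists (Ordinal m_gt0) => //; apply/imsetP; exists x; rewrite ?inE //.
apply/ffunP => s; rewrite ffunE; case: eqP => [->|] //.
by apply: val_inj; rewrite /= addn0 modn_small.
Qed.

Hypothesis hrho : m.-primitive_root rho.

Lemma mxpow_Xmat_latvec j l x :
  mxpow (X j) l *m latvec x = latvec (shift_coord j l x).
Proof.
rewrite !latvecE mxpow_XmatE mul_diag_mx; apply/matrixP => r c.
rewrite !mxE (bigD1 j) // [in RHS](bigD1 j) //= ffunE eqxx mulrA -exprD -mulnDr.
congr (_ * _).
  by rewrite /= addnC !(mulnC (digit j r)) !exprM (prim_expr_mod hrho).
by apply: eq_bigr => s /negPf sj; rewrite ffunE sj.
Qed.

Lemma sum_prim_root_expM a :
  \sum_(c < m) rho ^+ (c * a) = if (m %| a)%N then m%:R else 0.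
Proof.
under eq_bigr => c _ do rewrite mulnC exprM.
case: ifP => [/dvdnP [t ->]|na].
  rewrite (eq_bigr (fun _ => 1)) ?sumr_const ?card_ord // => c _.
  by rewrite mulnC exprM (prim_expr_order hrho) !expr1n.
have w1 : rho ^+ a != 1.
  rewrite -(expr0 rho) (eq_prim_root_expr hrho) mod0n.
  by rewrite -[_ == 0%N]/(m %| a)%N na.
have wm : (rho ^+ a) ^+ m = 1 by rewrite exprAC (prim_expr_order hrho) expr1n.
have := subrX1 (rho ^+ a) m; rewrite wm subrr => /esym /eqP.
by rewrite mulf_eq0 subr_eq0 (negPf w1) => /eqP.
Qed.

Lemma sum_prod_digit_expM (a : 'I_k -> nat) :
  \sum_(r : 'I_N) \prod_(s < k) rho ^+ (digit s r * a s)
  = if [forall s, m %| a s]%N then N%:R else 0.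
Proof.
transitivity (\sum_(z : expvec m k) \prod_(s < k) rho ^+ (z s * a s)).
  rewrite (reindex digits); last by apply: onW_bij; apply: digits_bij.
  by apply: eq_bigr => r _; apply: eq_bigr => s _; rewrite ffunE.
rewrite -(bigA_distr_bigA (fun s (c : 'I_m) => rho ^+ (c * a s))) /=.
under eq_bigr => s _ do rewrite sum_prim_root_expM.
case: ifP => [/forallP ma|/negbT/[!negb_forall]/existsP [s na]].
  rewrite natrX -[k in _ ^+ k]card_ord -prodr_const.
  by apply: eq_bigr => s _; rewrite ma.
by rewrite (bigD1 s) //= (negPf na) mul0r.
Qed.

Definition opp_expvec (y : expvec m k) : expvec m k :=
  [ffun s => Ordinal (ltn_pmod (m - y s) m_gt0)].

Lemma latvec_orth x y :
  \sum_r latvec x r 0 * latvec (opp_expvec y) r 0 = if x == y then N%:R else 0.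
Proof.
under eq_bigr => r _ do rewrite !latvecE !mxE -big_split /=.
under eq_bigr => r _ do under eq_bigr => s _ do rewrite -exprD -mulnDr.
rewrite (sum_prod_digit_expM (fun s => x s + opp_expvec y s)%N).
congr (if _ then _ else _); apply/forallP/eqP => [dvd_m|-> s].
  apply/ffunP => s; apply/val_inj/eqP.
  by move: (dvd_m s); rewrite ffunE dvdn_add_opp.
by rewrite ffunE dvdn_add_opp // eqxx.
Qed.

Hypothesis hq : (m %| #|F|.-1)%N.

Lemma natr_N_neq0 : N%:R != 0 :> F.
Proof. by rewrite natrX expf_neq0 // natr_neq0_dvdn_card_pred. Qed.

Lemma latvec_inj : injective latvec.
Proof.
move=> x y E; have := latvec_orth x y; rewrite E latvec_orth eqxx.
by case: eqP => // _ /eqP; rewrite (negPf natr_N_neq0).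
Qed.

Definition latmx (S : {set expvec m k}) : 'M[F]_(#|S|, N) :=
  \matrix_a (latvec (enum_val a))^T.

Lemma latmxE S a r : latmx S a r = latvec (enum_val a) r 0.
Proof. by rewrite [LHS]mxE [LHS]mxE. Qed.

Lemma latmx_free S : row_free (latmx S).
Proof.
apply/row_freeP.
exists (\matrix_(r, b) (latvec (opp_expvec (enum_val b)) r 0 / N%:R)).
apply/matrixP => a b; rewrite [LHS]mxE [RHS]mxE.
under eq_bigr => r _ do rewrite latmxE [X in _ * X]mxE mulrA.
rewrite -mulr_suml latvec_orth (inj_eq enum_val_inj).
by case: eqP => _; rewrite ?mul0r // mulfV // natr_N_neq0.
Qed.

Definition lattice_matrix n (M : 'M[F]_(N, n)) :=
  forall c, exists x, col c M = latvec x.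

Lemma imset_latvec_Lat n (M : 'M[F]_(N, n)) : lattice_matrix M ->
  latvec @: Lat M = [set col c M | c : 'I_n].
Proof.
move=> latM; apply/setP => v; apply/imsetP/imsetP => [[x]|[c _ ->]].
  by rewrite inE => /existsP [c /eqP <-] ->; exists c.
have [x Ex] := latM c; exists x => //; rewrite inE; apply/existsP.
by exists c; rewrite Ex.
Qed.

Lemma card_Lat n (M : 'M[F]_(N, n)) : lattice_matrix M ->
  injective (fun c => col c M) -> #|Lat M| = n.
Proof.
move=> latM injM.
rewrite -(card_imset _ latvec_inj) imset_latvec_Lat //.
by rewrite card_imset // card_ord.
Qed.

Lemma rank_Lat n (M : 'M[F]_(N, n)) : lattice_matrix M -> \rank M = #|Lat M|.
Proof.
move=> latM; rewrite -mxrank_tr.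
transitivity (\rank (latmx (Lat M))); last exact/eqP/latmx_free.
apply/eqmx_rank/andP; split; apply/row_subP => a.
  have [x Ex] := latM a; have xL : x \in Lat M.
    by rewrite inE; apply/existsP; exists a; rewrite Ex.
  apply: (eq_row_sub (enum_rank_in xL x)).
  by rewrite rowK enum_rankK_in // -Ex tr_col.
have := enum_valP a; rewrite inE => /existsP [c /eqP Ec].
by apply: (eq_row_sub c); rewrite rowK -Ec tr_col.
Qed.

Lemma lattice_matrix_mulX j l n (M : 'M[F]_(N, n)) : lattice_matrix M ->
  lattice_matrix (mxpow (X j) l *m M).
Proof.
move=> latM c; have [x Ex] := latM c.
by exists (shift_coord j l x); rewrite colE -mulmxA -colE Ex mxpow_Xmat_latvec.
Qed.

Lemma Lat_mulX j l n (M : 'M[F]_(N, n)) : lattice_matrix M ->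
  Lat (mxpow (X j) l *m M) = shift_coord j l @: Lat M.
Proof.
move=> latM; apply/setP => x; rewrite inE; apply/existsP/imsetP => [[c]|[y]].
  have [y Ey] := latM c; rewrite colE -mulmxA -colE Ey mxpow_Xmat_latvec.
  move=> /eqP /latvec_inj <-; exists y => //.
  by rewrite inE; apply/existsP; exists c; rewrite Ey.
rewrite inE => /existsP [c /eqP Ec] ->; exists c.
by rewrite colE -mulmxA -colE Ec mxpow_Xmat_latvec.
Qed.

Section BlockRow.
Variables (p : nat) (q_ : 'I_p -> nat) (B_ : forall l, 'M[F]_(N, q_ l)).

Lemma lattice_matrix_mxrow : (forall l, lattice_matrix (B_ l)) ->
  lattice_matrix (\mxrow_l B_ l).
Proof. by move=> latB c; rewrite col_mxrow; apply: latB. Qed.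

Lemma Lat_mxrow : Lat (\mxrow_l B_ l) = \bigcup_l Lat (B_ l).
Proof.
apply/setP => x; rewrite inE; apply/existsP/bigcupP => [[c Ec]|[l _]].
  by exists (tagnat.sig1 c) => //; rewrite inE; apply/existsP;
    exists (tagnat.sig2 c); rewrite -col_mxrow.
rewrite inE => /existsP [c Ec]; exists (tagnat.Rank l c).
by rewrite -(col_colsub (tagnat.Rank l)) -/(submxrow _ l) mxrowK.
Qed.

End BlockRow.

End LatticeVectors.

Theorem lemma4 (F : finFieldType) (m k : nat) (rho : F)
  (hm : (2 <= m)%N) (hk : (1 <= k)%N)
  (hq : (m %| #|F|.-1)%N) (hrho : m.-primitive_root rho)
  (i j : 'I_k) (V : 'M[F]_(m ^ k, m ^ (k - 1)))
  (hVcols : [set col c V | c : 'I_(m ^ (k - 1))] = Vset m k rho i)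
  (hVinj : injective (fun c : 'I_(m ^ (k - 1)) => col c V)) :
  let U := \bigcup_(l < m) Lat m k rho (mxpow (Xmat m k rho j) l *m V) in
  \rank (\mxrow_(l < m) (mxpow (Xmat m k rho j) l *m V)) = #|U|
  /\ #|U| = (if i == j then m ^ k else m ^ (k - 1))%N.
Proof.
move=> U; have m_gt0 := prim_order_gt0 hrho.
have latV : lattice_matrix rho V.
  move=> c; have : col c V \in latvec m k rho @: zero_coord_set m i.
    by rewrite -(Vset_latvec rho m_gt0) -hVcols; apply/imsetP; exists c.
  by case/imsetP => x _ ->; exists x.
have LatV : Lat m k rho V = zero_coord_set m i.
  apply: (imset_inj (latvec_inj m_gt0 hrho hq)).
  by rewrite imset_latvec_Lat // hVcols (Vset_latvec rho m_gt0).
split.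
  rewrite (rank_Lat m_gt0 hrho hq) ?Lat_mxrow //.
  by apply: lattice_matrix_mxrow => l; apply: lattice_matrix_mulX.
have -> : U = \bigcup_(l < m) shift_coord m_gt0 j l @: zero_coord_set m i.
  by apply: eq_bigr => l _; rewrite (Lat_mulX m_gt0 hrho hq) ?LatV.
rewrite bigcup_shift_zero_coord; case: eqP => _.
  by rewrite cardsT card_ffun !card_ord.
by rewrite -LatV (card_Lat m_gt0 hrho hq).
Qed.
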